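(* Let $J\subseteq S$ and $s\in S$. (1) If $s\in J$, then modulo $G_q(\emptyset)$, $\tau^+_Jt_s$ reduces to $(-1)^{\#J+1}q\tau^-_J$ and $\tau^-_Jt_s$ reduces to $(-1)^{\#J+1}\tau^+_J$. (2) If $s\notin J$ and $J''=\{j\in J\mid s<j\}$, then modulo $G_q(\emptyset)$, $\tau^+_Jt_s$ reduces to $(-1)^{\#J''}\tau^+_{J\cup\{s\}}+(-1)^{\#J+1}q\tau^-_J$ and $\tau^-_Jt_s$ reduces to $(-1)^{\#J''}\tau^-_{J\cup\{s\}}+(-1)^{\#J+1}\tau^+_J$.
   Context: $S$ is a finite set with a total order $<$, $R$ a commutative ring with $1$, $q\in R$, $A=R\langle t_s\mid s\in S\rangle$. For $J=\{j_1<\dots<j_{\#J}\}$, $t_J=t_{j_1}\cdots t_{j_{\#J}}$; for $I=\{j_{\alpha_1}<\dots<j_{\alpha_{\#I}}\}\subseteq J$, $\ell_J(I)=\sum_\nu(\alpha_\nu-\nu)$; $\tau^-_J=\sum_{I\subseteq J,\ \#I\text{ odd}}(-1)^{\ell_J(I)}(-q)^{(\#I-1)/2}t_{J\setminus I}$, $\tau^+_J=\sum_{I\subseteq J,\ \#I\text{ even}}(-1)^{\ell_J(I)}(-q)^{\#I/2}t_{J\setminus I}$. $G_q(\emptyset)=\{t_s^2-q: s\in S\}\cup\{t_rt_s+t_st_r-2q: s<r\}$, with leading monomials $t_s^2$ and $t_rt_s$ ($s<r$) for the degree lexicographic order (words compared by length, then lexicographically from the left). For a set $\mathcal I$ of elements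 with leading coefficient $1$, a reduction of $f$ modulo $\mathcal I$ replaces a term $c\,umv$ of $f$, where $m$ is the leading monomial of some $g\in\mathcal I$, by $c\,u(m-g)v$; $f$ reduces to $h$ if $h$ is obtained from $f$ by finitely many (possibly zero) reductions. *)

From HB Require Import structures.
From mathcomp Require Import all_boot all_order all_algebra.
Set Implicit Arguments. Unset Strict Implicit. Unset Printing Implicit Defensive.
Import Order.TTheory GRing.Theory.
Local Open Scope ring_scope.

(* Elements of the free algebra A = R<t_s | s in S> are represented by their
   coefficient functions  word -> R  (word = seq S, a word t_{w1}...t_{wn}).
   Equality of elements is pointwise equality of coefficients. *)
Section FreeAlg.
Variables (d : Order.disp_t) (S : finOrderType d) (R : comPzRingType) (q : R).

Definition word := seq S.
Definition elt := word -> R.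

Definition mono (w : word) : elt := fun x => (x == w)%:R.
Definition eadd (f g : elt) : elt := fun x => f x + g x.
Definition escale (c : R) (f : elt) : elt := fun x => c * f x.
Definition emul (f g : elt) : elt :=
  fun w => \sum_(i < (size w).+1) f (take i w) * g (drop i w).

Definition sorted_enum (J : {set S}) : word := sort (<=%O) (enum J).
Definition tJ (J : {set S}) : word := sorted_enum J.

(* ell_J(I) = sum_nu (alpha_nu - nu), where I = {j_{alpha_1} < ... < j_{alpha_#I}} *)
Definition ell (J I : {set S}) : nat :=
  (* x = j_{alpha_nu} is the nu-th element of sorted I; alpha_nu, nu are its
     positions in sorted J and sorted I respectively *)
  \sum_(x <- sorted_enum I) (index x (sorted_enum J) - index x (sorted_enum I))%N.

Definition tau_minus (J : {set S}) : elt := fun w =>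
  \sum_(I in powerset J | odd #|I|)
     (-1) ^+ ell J I * (- q) ^+ ((#|I|).-1)./2 * mono (tJ (J :\: I)) w.

Definition tau_plus (J : {set S}) : elt := fun w =>
  \sum_(I in powerset J | ~~ odd #|I|)
     (-1) ^+ ell J I * (- q) ^+ (#|I|)./2 * mono (tJ (J :\: I)) w.

(* G_q(emptyset), as pairs (leading monomial, element) *)
Definition Gq (m : word) (g : elt) : Prop :=
  (exists s : S, m = [:: s; s] /\ g = eadd (mono [:: s; s]) (escale (- q) (mono [::])))
  \/ (exists s r : S, (s < r)%O /\ m = [:: r; s] /\
        g = eadd (eadd (mono [:: r; s]) (mono [:: s; r])) (escale (- (2%:R * q)) (mono [::]))).

(* one reduction: replace the term c.umv of f (c = coefficient of umv in f)
   by c.u(m-g)v, i.e. h = f - c.ugv *)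
Definition red1 (f h : elt) : Prop :=
  exists (u v m : word) (g : elt), Gq m g /\
    forall x, h x = f x - f (u ++ m ++ v) * emul (emul (mono u) g) (mono v) x.

Inductive reduces : elt -> elt -> Prop :=
| reduces_refl f h : (forall x, f x = h x) -> reduces f h
| reduces_step f g h : red1 f g -> reduces g h -> reduces f h.

End FreeAlg.

Arguments mono {d S R} w _.
Arguments eadd {d S R} f g _.
Arguments escale {d S R} c f _.
Arguments emul {d S R} f g _.
Arguments tau_minus {d S R} q J _.
Arguments tau_plus {d S R} q J _.
Arguments reduces {d S R} q _ _.

(* Removing the largest element z of J = K ∪ {z} gives the recursions
     τ⁺_J = τ⁺_K t_z + (-1)^#K q τ⁻_K,     τ⁻_J = τ⁻_K t_z + (-1)^#K τ⁺_K,
   so the claim is an identity when s exceeds every element of J.  Otherwise induct on J: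
   for s = z reduce t_z t_z to q; for s < z reduce t_z t_s to -t_s t_z + 2q and apply the
   induction hypothesis for K, multiplied on the right by t_z.  Every τ is supported on
   increasing words while every reduction takes place at a non-increasing word, so reducing
   one summand leaves the others untouched; [reduces_on P] keeps track of the words at
   which reductions take place. *)

From HB Require Import structures.
From mathcomp Require Import all_boot all_order all_algebra.
From mathcomp Require Import ring zify.
Import Order.TTheory GRing.Theory.
Set Implicit Arguments. Unset Strict Implicit. Unset Printing Implicit Defensive.
Local Open Scope ring_scope.

Section FreeAlgebra.
Variables (d : Order.disp_t) (S : finOrderType d) (R : comPzRingType).
Local Notation word := (seq S).
Local Notation elt := (word -> R).

Lemma catIr (m : word) : injective (cat^~ m).
Proof.
move=> w1 w2 /(congr1 rev) /eqP; rewrite !rev_cat eqseq_cat // eqxx /=.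
by move/eqP/(inv_inj revK).
Qed.

Lemma emul_monor_cat (f : elt) v y : emul f (mono v) (y ++ v) = f y.
Proof.
rewrite /emul size_cat.
have lt_y : (size y < (size y + size v).+1)%N by rewrite ltnS leq_addr.
rewrite (bigD1 (Ordinal lt_y)) //= take_size_cat // drop_size_cat // /mono eqxx mulr1.
rewrite big1 ?addr0 // => i Ni; rewrite /mono; case: eqP => [Ev|]; last by rewrite mulr0.
case/eqP: Ni; apply/val_eqP/eqP => /=.
have := ltn_ord i; move/(congr1 size): Ev; rewrite size_drop size_cat /=; lia.
Qed.

Lemma emul_monor_notsuffix (f : elt) v x : ~~ suffix v x -> emul f (mono v) x = 0.
Proof.
move=> Nv; rewrite /emul big1 // => i _; rewrite /mono; case: eqP => [Ev|]; last by rewrite mulr0.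
by case/negP: Nv; apply/suffixP; exists (take i x); rewrite -Ev cat_take_drop.
Qed.

Lemma emul_monol_cat (f : elt) u y : emul (mono u) f (u ++ y) = f y.
Proof.
rewrite /emul size_cat.
have lt_u : (size u < (size u + size y).+1)%N by rewrite ltnS leq_addr.
rewrite (bigD1 (Ordinal lt_u)) //= take_size_cat // drop_size_cat // /mono eqxx mul1r.
rewrite big1 ?addr0 // => i Ni; rewrite /mono; case: eqP => [Eu|]; last by rewrite mul0r.
case/eqP: Ni; apply/val_eqP/eqP => /=.
have := ltn_ord i; move/(congr1 size): Eu; rewrite size_take size_cat /=.
case: ltnP => ? ; lia.
Qed.

Lemma emul_monol_notprefix (f : elt) u x : ~~ prefix u x -> emul (mono u) f x = 0.
Proof.
move=> Nu; rewrite /emul big1 // => i _; rewrite /mono; case: eqP => [Eu|]; last by rewrite mul0r.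
by case/negP: Nu; apply/prefixP; exists (drop i x); rewrite -Eu cat_take_drop.
Qed.

Lemma emul1r (f : elt) : emul f (mono [::]) =1 f.
Proof. by move=> x; have := emul_monor_cat f [::] x; rewrite cats0. Qed.

Lemma emul_monorA (f : elt) a b : emul (emul f (mono a)) (mono b) =1 emul f (mono (a ++ b)).
Proof.
move=> x; have [/suffixP[y ->]|Nb] := boolP (suffix b x).
  rewrite emul_monor_cat; have [/suffixP[y' ->]|Na] := boolP (suffix a y).
    by rewrite emul_monor_cat -catA emul_monor_cat.
  rewrite !emul_monor_notsuffix //; apply/negP => /suffixP[w]; rewrite catA => /catIr Ey.
  by case/negP: Na; apply/suffixP; exists w.
rewrite !emul_monor_notsuffix //; apply/negP => /suffixP[w]; rewrite catA => Ex.
by case/negP: Nb; apply/suffixP; exists (w ++ a).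
Qed.

Lemma emul_mono (a b : word) : emul (mono a) (mono b) =1 mono (a ++ b) :> elt.
Proof.
move=> x; have [/suffixP[y ->]|Nb] := boolP (suffix b x).
  by rewrite emul_monor_cat /mono (inj_eq (@catIr b)).
rewrite emul_monor_notsuffix // /mono; case: eqP => // Ex.
by case/negP: Nb; apply/suffixP; exists a.
Qed.

Lemma emul_linl (f g h k : elt) c :
  g =1 (fun x => f x + c * h x) -> emul g k =1 (fun x => emul f k x + c * emul h k x).
Proof.
by move=> E x; rewrite /emul mulr_sumr -big_split; apply: eq_bigr => i _; rewrite E /=; ring.
Qed.

Lemma emul_linr (f g h k : elt) c :
  g =1 (fun x => f x + c * h x) -> emul k g =1 (fun x => emul k f x + c * emul k h x).
Proof.
by move=> E x; rewrite /emul mulr_sumr -big_split; apply: eq_bigr => i _; rewrite E /=; ring.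
Qed.

Lemma emulZl (f k : elt) c : emul (fun w => c * f w) k =1 (fun x => c * emul f k x).
Proof. by move=> x; rewrite /emul mulr_sumr; apply: eq_bigr => i _; ring. Qed.

Lemma emul_suml (I : finType) (P : pred I) (F : I -> elt) k :
  emul (fun w => \sum_(i | P i) F i w) k =1 (fun x => \sum_(i | P i) emul (F i) k x).
Proof.
by move=> x; rewrite /emul; under eq_bigr do rewrite mulr_suml; rewrite exchange_big.
Qed.

End FreeAlgebra.

Section Reductions.
Variables (d : Order.disp_t) (S : finOrderType d) (R : comPzRingType) (q : R).
Local Notation word := (seq S).
Local Notation elt := (word -> R).

Inductive reduces_on (P : word -> Prop) : elt -> elt -> Prop :=
| reduces_on_refl f h : f =1 h -> reduces_on P f h
| reduces_on_step f g h u v m gm : Gq q m gm -> P (u ++ m ++ v) ->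
    g =1 (fun x => f x - f (u ++ m ++ v) * emul (emul (mono u) gm) (mono v) x) ->
    reduces_on P g h -> reduces_on P f h.

Lemma reduces_on_reduces P f h : reduces_on P f h -> reduces q f h.
Proof.
elim=> [f' h' E|f' g' h' u v m gm Gm _ Eg _ IH]; first exact: reduces_refl.
by apply: reduces_step IH; exists u, v, m, gm.
Qed.

Lemma reduces_on_eql P f f' h : f =1 f' -> reduces_on P f' h -> reduces_on P f h.
Proof.
move=> E red; move: E; case: red => [f1 h1 E1|f1 g1 h1 u v m gm Gm Pw Eg red] E.
  by apply: reduces_on_refl => x; rewrite E E1.
by apply: (reduces_on_step Gm Pw _ red) => x; rewrite Eg !E.
Qed.

Lemma reduces_on_eqr P f h h' : h =1 h' -> reduces_on P f h -> reduces_on P f h'.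
Proof.
move=> E red; move: E; elim: red => [f1 h1 E1|f1 g1 h1 u v m gm Gm Pw Eg _ IH] E.
  by apply: reduces_on_refl => x; rewrite E1 E.
exact: (reduces_on_step Gm Pw Eg (IH E)).
Qed.

Lemma reduces_on_trans P f g h : reduces_on P f g -> reduces_on P g h -> reduces_on P f h.
Proof.
elim=> [f1 h1 E|f1 g1 h1 u v m gm Gm Pw Eg _ IH] gh; first exact: (reduces_on_eql E).
exact: (reduces_on_step Gm Pw Eg (IH gh)).
Qed.

Lemma reduces_on_sub (P P' : word -> Prop) f h :
  (forall w, P w -> P' w) -> reduces_on P f h -> reduces_on P' f h.
Proof.
move=> PP'; elim=> [f1 h1 E|f1 g1 h1 u v m gm Gm Pw Eg _ IH]; first exact: reduces_on_refl.
exact: (reduces_on_step Gm (PP' _ Pw) Eg).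
Qed.

Lemma reduces_on_addl P f h (r : elt) c : (forall w, P w -> r w = 0) ->
  reduces_on P f h -> reduces_on P (fun x => r x + c * f x) (fun x => r x + c * h x).
Proof.
move=> r0; elim=> [f1 h1 E|f1 g1 h1 u v m gm Gm Pw Eg _ IH].
  by apply: reduces_on_refl => x; rewrite E.
by apply: (reduces_on_step Gm Pw _ IH) => x; rewrite Eg (r0 _ Pw); ring.
Qed.

Lemma reduces_on_mulr P f h t : reduces_on P f h ->
  reduces_on (fun w => exists2 w', P w' & w = w' ++ t)
    (emul f (mono t)) (emul h (mono t)).
Proof.
elim=> [f1 h1 E|f1 g1 h1 u v m gm Gm Pw Eg _ IH].
  by apply: reduces_on_refl => x; rewrite /emul; apply: eq_bigr => i _; rewrite E.
apply: (reduces_on_step (u := u) (v := v ++ t) Gm _ _ IH).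
  by exists (u ++ m ++ v) => //; rewrite !catA.
have Eg' : g1 =1 (fun y => f1 y + (- f1 (u ++ m ++ v)) * emul (emul (mono u) gm) (mono v) y).
  by move=> y; rewrite Eg; ring.
have -> : u ++ m ++ v ++ t = (u ++ m ++ v) ++ t by rewrite !catA.
by move=> x; rewrite (emul_linl _ Eg') emul_monorA emul_monor_cat; ring.
Qed.

Lemma Gq_shape m gm : Gq q m gm -> exists a b, m = [:: a; b] /\
  forall y : word, y != m -> y != [:: b; a] -> y != [::] -> gm y = 0.
Proof.
case=> [[s [-> ->]]|[s [r [_ [-> ->]]]]].
  exists s, s; split=> // y N1 _ N3.
  by rewrite /eadd /escale /mono (negbTE N1) (negbTE N3) /=; ring.
exists r, s; split=> // y N1 N2 N3.
by rewrite /eadd /escale /mono (negbTE N1) (negbTE N2) (negbTE N3) /=; ring.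
Qed.

Lemma Gq_lead_not_sorted (m y : word) gm : Gq q m gm -> ~~ sorted <%O (y ++ m).
Proof.
case=> [[s [-> _]]|[s [r [sr [-> _]]]]]; apply/negP => /cat_sorted2[_] /=.
  by rewrite ltxx.
by rewrite andbT (lt_gtF sr).
Qed.

Lemma emul_mono_Gq_other (w0 w1 m : word) gm : Gq q m gm -> w1 != w0 -> ~~ suffix m w0 ->
  emul (mono w0) gm (w1 ++ m) = 0.
Proof.
move=> Gm Nw Nsuf; have [a [b [Em gm0]]] := Gq_shape Gm.
have [/prefixP [y Ey]|Np] := boolP (prefix w0 (w1 ++ m)); last exact: emul_monol_notprefix.
rewrite Ey emul_monol_cat gm0 //.
- by apply: contra_neq Nw => Ey0; move: Ey; rewrite Ey0 => /catIr.
- apply: contra_neq Nw => Ey0; move: (Ey); rewrite Ey0 Em => Ey'.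
  have Eab : b = a by move/(congr1 (last a)): Ey'; rewrite !last_cat.
  by move: Ey'; rewrite Eab => /catIr.
- apply: contraNneq Nsuf => Ey0.
  by apply/suffixP; exists w1; rewrite -[w0]cats0 -Ey0 Ey.
Qed.

Lemma reduces_on_mul_lead (ws : seq word) (f : elt) m gm : uniq ws ->
  {in ws, forall w, ~~ suffix m w} -> (forall w, w \notin ws -> f w = 0) -> Gq q m gm ->
  reduces_on (fun w => exists2 w0, w0 \in ws & w = w0 ++ m)
    (emul f (mono m)) (fun x => emul f (mono m) x - emul f gm x).
Proof.
move=> + + + Gm; elim: ws f => [|w0 ws IH] f.
  move=> _ _ f0; apply: reduces_on_refl => x.
  by rewrite /emul !big1 ?subr0 // => i _; rewrite f0 ?mul0r.
move=> /= /andP[w0ws uws] nsuf fws.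
pose f' x := if x == w0 then 0 else f x.
have f'ws w : w \notin ws -> f' w = 0.
  by rewrite /f'; case: eqP => // /eqP Nw Nws; apply: fws; rewrite inE negb_or Nw.
have Ef : f =1 (fun x => f' x + f w0 * mono w0 x).
  by move=> x; rewrite /f' /mono; case: eqP => [->|_] /=; ring.
pose r x := f w0 * (emul (mono w0) (mono m) x - emul (mono w0) gm x).
have r0 w : (exists2 w1, w1 \in ws & w = w1 ++ m) -> r w = 0.
  case=> w1 w1ws ->; have Nw : w1 != w0 by apply: contraNneq w0ws => <-.
  rewrite /r emul_monor_cat /mono (negbTE Nw) emul_mono_Gq_other ?nsuf ?mem_head //=.
  by rewrite subr0 mulr0.
have nsuf' : {in ws, forall w, ~~ suffix m w}.
  by move=> w ww; apply: nsuf; rewrite inE ww orbT.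
have IHw := reduces_on_addl 1 r0 (IH f' uws nsuf' f'ws).
apply: (reduces_on_step (u := w0) (v := [::]) Gm _ _
          (reduces_on_sub _ (reduces_on_eqr _ IHw))).
- by exists w0; rewrite ?mem_head ?cats0.
- move=> x; rewrite cats0 emul_monor_cat emul1r (emul_linl _ Ef) /r; ring.
- by move=> w [w1 w1ws ->]; exists w1 => //; rewrite inE w1ws orbT.
- by move=> x; rewrite (emul_linl _ Ef) (emul_linl gm Ef) /r; ring.
Qed.

End Reductions.

Section TauSum.
Variables (d : Order.disp_t) (S : finOrderType d) (R : comPzRingType) (q : R).
Local Notation word := (seq S).
Local Notation elt := (word -> R).

Lemma sorted_rcons_lt (y : word) z : sorted <%O y -> {in y, forall x, (x < z)%O} ->
  sorted <%O (y ++ [:: z]).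
Proof.
case: y => [|x p] //= sxp ltz; rewrite cats1 rcons_path sxp /=.
by apply: ltz; exact: mem_last.
Qed.

Lemma tJ_sorted (K : {set S}) : sorted <%O (tJ K).
Proof. by rewrite /tJ /sorted_enum sort_lt_sorted enum_uniq. Qed.

Lemma mem_sorted_enum (K : {set S}) x : (x \in sorted_enum K) = (x \in K).
Proof. by rewrite mem_sort mem_enum. Qed.

Lemma size_sorted_enum (K : {set S}) : size (sorted_enum K) = #|K|.
Proof. by rewrite size_sort cardE. Qed.

Lemma sorted_enum_setU1_max (K : {set S}) z : (forall j, j \in K -> (j < z)%O) ->
  sorted_enum (z |: K) = sorted_enum K ++ [:: z].
Proof.
move=> Kz; have lt_cat : sorted <%O (sorted_enum K ++ [:: z]).
  by apply: sorted_rcons_lt (tJ_sorted K) _ => x; rewrite mem_sorted_enum; exact: Kz.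
move: lt_cat; rewrite lt_sorted_uniq_le => /andP[u_cat le_cat].
apply: le_sorted_eq; [exact: sort_le_sorted | exact: le_cat |].
apply: uniq_perm; [by rewrite sort_uniq enum_uniq | exact: u_cat | move=> x].
by rewrite mem_cat !mem_sorted_enum !inE orbC.
Qed.

Lemma tJ_set_of_sorted (w : word) : sorted <%O w -> tJ [set x in w] = w.
Proof.
rewrite lt_sorted_uniq_le => /andP [u_w le_w].
apply: le_sorted_eq; [exact: sort_le_sorted | exact: le_w |].
apply: uniq_perm; [by rewrite sort_uniq enum_uniq | exact: u_w | move=> x].
by rewrite mem_sorted_enum inE.
Qed.

Lemma reduces_on_mul_lead_sorted (f : elt) m gm :
  (forall w, ~~ sorted <%O w -> f w = 0) -> Gq q m gm ->
  reduces_on q (fun w => suffix m w /\ ~~ sorted <%O w)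
    (emul f (mono m)) (fun x => emul f (mono m) x - emul f gm x).
Proof.
move=> f0 Gm; set ws := undup [seq tJ L | L : {set S}].
have ws_sorted w : w \in ws -> sorted <%O w.
  by rewrite mem_undup => /mapP [L _ ->]; exact: tJ_sorted.
have nsuf : {in ws, forall w, ~~ suffix m w}.
  move=> w /ws_sorted; apply: contraTN => /suffixP [y ->].
  exact: Gq_lead_not_sorted Gm.
have fws w : w \notin ws -> f w = 0.
  move=> Nw; apply: f0; apply: contra Nw => sw.
  by rewrite mem_undup; apply/mapP; exists [set x in w]; rewrite ?mem_enum ?tJ_set_of_sorted.
apply: reduces_on_sub (reduces_on_mul_lead (undup_uniq _) nsuf fws Gm).
by move=> _ [w0 _ ->]; split; [exact: suffix_suffix | exact: Gq_lead_not_sorted Gm].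
Qed.

Definition incr_in (K : {set S}) (w : word) := sorted <%O w && all [in K] w.

Lemma incr_inS (K L : {set S}) w : K \subset L -> incr_in K w -> incr_in L w.
Proof.
move=> KL /andP [sw Kw]; rewrite /incr_in sw; apply/allP => x xw.
by apply: (subsetP KL); move/allP: Kw; apply.
Qed.

(* [tau_plus q J] and [tau_minus q J] are, definitionally, [tau_sum (fun n => ~~ odd n) half J]
   and [tau_sum odd (fun n => n.-1./2) J]. *)
Definition tau_sum (P : pred nat) (e : nat -> nat) (J : {set S}) : elt := fun w =>
  \sum_(I in powerset J | P #|I|) (-1) ^+ ell J I * (- q) ^+ e #|I| * mono (tJ (J :\: I)) w.

Lemma tau_sum_supp P e K w : ~~ incr_in K w -> tau_sum P e K w = 0.
Proof.
move=> Nw; rewrite /tau_sum big1 // => I _; rewrite /mono.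
case: eqP => [Ew|_]; last by rewrite mulr0.
case/negP: Nw; rewrite /incr_in Ew tJ_sorted; apply/allP => x.
by rewrite /tJ mem_sorted_enum inE => /andP[].
Qed.

Lemma subsetU1_setU1 (z : S) (A B : {set S}) : z \notin A -> z \notin B ->
  (z |: A \subset z |: B) = (A \subset B).
Proof.
move=> zA zB; apply/subsetP/subsetP => AB x.
  move=> Ax; have := AB x; rewrite !inE Ax orbT => /(_ isT) /orP [/eqP Exz|//].
  by rewrite -Exz Ax in zA.
by rewrite !inE => /orP [->//|/AB ->]; rewrite orbT.
Qed.

Lemma big_powersetU1 (F : {set S} -> R) (z : S) (K : {set S}) (P : pred nat) : z \notin K ->
  \sum_(I in powerset (z |: K) | P #|I|) F I =
  \sum_(I in powerset K | P #|I|) F I + \sum_(I in powerset K | P #|I|.+1) F (z |: I).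
Proof.
move=> zK; rewrite (bigID (fun I : {set S} => z \in I)) /= addrC; congr (_ + _).
  apply: eq_bigl => I; rewrite !powersetE -{2}(setU1K zK) subsetD1.
  by case: (I \subset _); case: (P _); case: (z \in I).
rewrite (reindex_onto (fun I => z |: I) (fun I => I :\ z)) /=; last first.
  by move=> I /andP [_ zI]; rewrite setD1K.
apply: eq_bigl => I; have [zI|zI] := boolP (z \in I).
  have -> : ((z |: I) :\ z == I) = false.
    by apply/negbTE/eqP => E; move: zI; rewrite -E !inE eqxx.
  rewrite !andbF; apply/esym/negbTE; rewrite powersetE.
  by apply/negP => /andP [/subsetP/(_ z zI) zK' _]; rewrite zK' in zK.
by rewrite setU1K // eqxx andbT setU11 andbT cardsU1 zI !powersetE subsetU1_setU1.
Qed.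

Lemma ell_setU1_max (K I : {set S}) z : (forall j, j \in K -> (j < z)%O) -> I \subset K ->
  ell (z |: K) I = ell K I.
Proof.
move=> Kz IK; rewrite /ell sorted_enum_setU1_max //; apply: eq_big_seq => x xI.
have xK : x \in sorted_enum K by move: xI; rewrite !mem_sorted_enum => /(subsetP IK).
by rewrite index_cat xK.
Qed.

Lemma ell_setU1_max_setU1 (K I : {set S}) z : (forall j, j \in K -> (j < z)%O) -> I \subset K ->
  ell (z |: K) (z |: I) = (ell K I + #|K :\: I|)%N.
Proof.
move=> Kz IK; have Iz j : j \in I -> (j < z)%O by move/(subsetP IK); exact: Kz.
have zK : z \notin K by apply/negP => /Kz; rewrite ltxx.
have zI : z \notin I by apply/negP => /Iz; rewrite ltxx.
rewrite /ell !sorted_enum_setU1_max // big_cat big_seq1 /=; congr (_ + _)%N.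
  apply: eq_big_seq => x xI.
  have xK : x \in sorted_enum K by move: xI; rewrite !mem_sorted_enum => /(subsetP IK).
  by rewrite !index_cat xK xI.
rewrite !index_cat !mem_sorted_enum (negbTE zK) (negbTE zI) /= eqxx !addn0.
by rewrite !size_sorted_enum cardsDS.
Qed.

Lemma tau_sum_setU1_max P e (K : {set S}) z : (forall j, j \in K -> (j < z)%O) ->
  tau_sum P e (z |: K) =1 (fun x => emul (tau_sum P e K) (mono [:: z]) x +
    \sum_(I in powerset K | P #|I|.+1)
      (-1) ^+ (ell K I + #|K :\: I|) * (- q) ^+ e #|I|.+1 * mono (tJ (K :\: I)) x).
Proof.
move=> Kz x; have zK : z \notin K by apply/negP => /Kz; rewrite ltxx.
rewrite /tau_sum big_powersetU1 // emul_suml; congr (_ + _).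
  apply: eq_bigr => I /andP [IK _]; rewrite powersetE in IK.
  rewrite emulZl emul_mono ell_setU1_max //.
  have zI : z \notin I by apply: contra zK; apply: (subsetP IK).
  have -> : (z |: K) :\: I = z |: (K :\: I).
    by apply/setP => y; rewrite !inE; case: (y =P z) => [->|] //=; rewrite zI.
  rewrite /tJ sorted_enum_setU1_max // => j; rewrite inE => /andP [_]; exact: Kz.
apply: eq_bigr => I /andP [IK _]; rewrite powersetE in IK.
have zI : z \notin I by apply: contra zK; apply: (subsetP IK).
rewrite ell_setU1_max_setU1 // cardsU1 zI.
suff -> : (z |: K) :\: (z |: I) = K :\: I by [].
by apply/setP => y; rewrite !inE; case: eqP => [->|_] /=; rewrite ?(negbTE zK) ?andbF.
Qed.

End TauSum.

Section TauRecursion.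
Variables (d : Order.disp_t) (S : finOrderType d) (R : comPzRingType) (q : R).

Lemma signrB m n : (n <= m)%N -> (-1) ^+ (m - n) = (-1) ^+ m * (-1) ^+ n :> R.
Proof. by move=> nm; rewrite -signr_odd oddB // signr_addb !signr_odd. Qed.

Variables (K : {set S}) (z : S).
Hypothesis Kz : forall j, j \in K -> (j < z)%O.

Lemma tau_plus_setU1_max :
  tau_plus q (z |: K) =1 (fun x => emul (tau_plus q K) (mono [:: z]) x +
    (-1) ^+ #|K| * q * tau_minus q K x).
Proof.
move=> x; rewrite [LHS](tau_sum_setU1_max q (fun n => ~~ odd n) half Kz x).
rewrite /tau_minus mulr_sumr; congr (_ + _); apply: eq_big => [I|I]; first by rewrite /= negbK.
rewrite powersetE /= negbK => /andP [IK oddI]; have [k Ik] : exists k, #|I| = k.*2.+1.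
  by exists #|I|./2; rewrite -{1}(odd_double_half #|I|) oddI.
rewrite cardsDS // exprD signrB ?subset_leq_card // Ik /= doubleK exprS.
by rewrite -[(-1) ^+ k.*2]signr_odd odd_double expr0 [(- q) ^+ _.+1]exprS; ring.
Qed.

Lemma tau_minus_setU1_max :
  tau_minus q (z |: K) =1 (fun x => emul (tau_minus q K) (mono [:: z]) x +
    (-1) ^+ #|K| * tau_plus q K x).
Proof.
move=> x; rewrite [LHS](tau_sum_setU1_max q odd (fun n => n.-1./2) Kz x).
rewrite /tau_plus mulr_sumr; congr (_ + _); apply: eq_bigr => I.
rewrite powersetE /= => /andP [IK evenI]; have [k Ik] : exists k, #|I| = k.*2.
  by exists #|I|./2; rewrite -{1}(odd_double_half #|I|) (negbTE evenI).
rewrite cardsDS // exprD signrB ?subset_leq_card // Ik.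
by rewrite -[(-1) ^+ k.*2]signr_odd odd_double expr0; ring.
Qed.

End TauRecursion.

Section ReductionSteps.
Variables (d : Order.disp_t) (S : finOrderType d) (R : comPzRingType) (q : R).
Local Notation word := (seq S).
Local Notation elt := (word -> R).
Local Notation unsorted := (fun w : word => ~~ sorted <%O w).
Variables (K : {set S}) (z : S) (F G : elt).
Hypotheses (Kz : forall j, j \in K -> (j < z)%O).
Hypotheses (F0 : forall w, ~~ incr_in K w -> F w = 0) (G0 : forall w, ~~ incr_in K w -> G w = 0).

Let zK : z \notin K. Proof. by apply/negP => /Kz; rewrite ltxx. Qed.

Let F0_sorted w : ~~ sorted <%O w -> F w = 0.
Proof. by move=> Nw; apply: F0; rewrite /incr_in negb_and Nw. Qed.

Let not_incr_rcons w : ~~ incr_in K (w ++ [:: z]).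
Proof. by rewrite /incr_in all_cat /= (negbTE zK) !andbF. Qed.

Lemma reduces_on_mul_sq a :
  reduces_on q unsorted (fun x => emul F (mono [:: z; z]) x + a * emul G (mono [:: z]) x)
                        (fun x => q * F x + a * emul G (mono [:: z]) x).
Proof.
pose gm := eadd (mono [:: z; z]) (escale (- q) (mono [::])).
have Gm : Gq q [:: z; z] gm by left; exists z.
have Egm : gm =1 (fun y => mono [:: z; z] y + (- q) * mono [::] y) by [].
have G0_zz w : suffix [:: z; z] w /\ unsorted w -> a * emul G (mono [:: z]) w = 0.
  case=> /suffixP [w0 ->] _; rewrite -[w0 ++ _]/(w0 ++ [:: z] ++ [:: z]) catA.
  by rewrite emul_monor_cat (G0 (not_incr_rcons _)) mulr0.
apply: reduces_on_eql (reduces_on_eqr _ (reduces_on_sub _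
          (reduces_on_addl 1 G0_zz (reduces_on_mul_lead_sorted F0_sorted Gm)))).
- by move=> x; ring.
- by move=> x; rewrite (emul_linr F Egm) emul1r; ring.
- by move=> w [].
Qed.

Variable s : S.
Hypothesis sz : (s < z)%O.

Lemma reduces_on_mul_comm a :
  reduces_on q unsorted (fun x => emul F (mono [:: z; s]) x + a * emul G (mono [:: s]) x)
    (fun x => - emul (emul F (mono [:: s])) (mono [:: z]) x + 2%:R * q * F x +
              a * emul G (mono [:: s]) x).
Proof.
pose gm := eadd (eadd (mono [:: z; s]) (mono [:: s; z])) (escale (- (2%:R * q)) (mono [::])).
have Gm : Gq q [:: z; s] gm by right; exists s, z.
have Egm : gm =1 (fun y => mono [:: z; s] y +
             1 * (mono [:: s; z] y + (- (2%:R * q)) * mono [::] y)).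
  by move=> y; rewrite /gm /eadd /escale; ring.
have G0_zs w : suffix [:: z; s] w /\ unsorted w -> a * emul G (mono [:: s]) w = 0.
  case=> /suffixP [w0 ->] _; rewrite -[w0 ++ _]/(w0 ++ [:: z] ++ [:: s]) catA.
  by rewrite emul_monor_cat (G0 (not_incr_rcons _)) mulr0.
apply: reduces_on_eql (reduces_on_eqr _ (reduces_on_sub _
          (reduces_on_addl 1 G0_zs (reduces_on_mul_lead_sorted F0_sorted Gm)))).
- by move=> x; ring.
- move=> x; rewrite (emul_linr F Egm) (emul_linr F (frefl _)) emul1r emul_monorA.
  by rewrite /=; ring.
- by move=> w [].
Qed.

Variable X : elt.
Hypothesis X0 : forall w, ~~ incr_in (s |: K) w -> X w = 0.

Let emul_X_z0 w : ~~ sorted <%O w -> emul X (mono [:: z]) w = 0.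
Proof.
move=> Nw; have [/suffixP [y Ey]|Nz] := boolP (suffix [:: z] w); last first.
  exact: emul_monor_notsuffix.
rewrite Ey emul_monor_cat X0 //; apply: contra Nw; rewrite Ey => /andP [sy /allP ys].
by apply: sorted_rcons_lt sy _ => x /ys; rewrite in_setU1 => /orP [/eqP -> //|/Kz].
Qed.

(* Commute t_z past t_s, then reduce F t_s to X in front of the trailing t_z, and G t_s to Y. *)
Lemma reduces_on_mul_swap a Y :
  reduces_on q unsorted (emul F (mono [:: s])) X ->
  reduces_on q unsorted (emul G (mono [:: s])) Y ->
  reduces_on q unsorted (fun x => emul F (mono [:: z; s]) x + a * emul G (mono [:: s]) x)
                        (fun x => - emul X (mono [:: z]) x + 2%:R * q * F x + a * Y x).
Proof.
move=> FX GY.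
have FG0 w : (exists2 w', unsorted w' & w = w' ++ [:: z]) ->
    2%:R * q * F w + a * emul G (mono [:: s]) w = 0.
  case=> w' _ ->; rewrite (F0 (not_incr_rcons _)) emul_monor_notsuffix; first by ring.
  by rewrite -[[:: s]]/(rcons [::] s) cats1 suffix_rcons (lt_eqF sz).
have FX0 w : unsorted w -> 2%:R * q * F w + (-1) * emul X (mono [:: z]) w = 0.
  by move=> Nw; rewrite F0_sorted // emul_X_z0 //; ring.
have FXz := reduces_on_addl (-1) FG0 (reduces_on_mulr [:: z] FX).
apply: reduces_on_trans (reduces_on_mul_comm a) _.
apply: reduces_on_eql (reduces_on_trans (reduces_on_sub _ FXz)
         (reduces_on_eql _ (reduces_on_eqr _ (reduces_on_addl a FX0 GY))))
  => [x|w [w' Nw' ->]|x|x]; [ring | | ring | ring].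
by apply: contra Nw' => /cat_sorted2[].
Qed.

End ReductionSteps.

Lemma set_max_ind (d : Order.disp_t) (S : finOrderType d) (P : {set S} -> Prop) :
  P set0 ->
  (forall (z : S) (K : {set S}), (forall j, j \in K -> (j < z)%O) -> P K -> P (z |: K)) ->
  forall J, P J.
Proof.
move=> P0 PU1 J; elim: {J}#|J| {-2}J (erefl #|J|) => [|n IH] J cardJ.
  by move/eqP: cardJ; rewrite cards_eq0 => /eqP ->.
have /set0Pn [j0 j0J] : J != set0 by rewrite -card_gt0 cardJ.
have [z zJ zmax] := arg_maxP (fun x : S => x) j0J.
rewrite -(setD1K zJ); apply: PU1.
  by move=> j; rewrite !inE => /andP [jz jJ]; rewrite lt_neqAle jz; exact: zmax.
have {}zJ : z \in J := zJ.
by apply: IH; move: cardJ; rewrite (cardsD1 z J) zJ add1n => -[].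
Qed.

Section TauReduction.
Variables (d : Order.disp_t) (S : finOrderType d) (R : comPzRingType) (q : R).
Local Notation word := (seq S).
Local Notation elt := (word -> R).
Local Notation unsorted := (fun w : word => ~~ sorted <%O w).

(* Indexing τ⁺, τ⁻ by a boolean lets one recursion, [tau_setU1_max], serve both. *)
Definition tau (b : bool) (J : {set S}) : elt := if b then tau_plus q J else tau_minus q J.
Definition twist (b : bool) : R := if b then q else 1.

Lemma twistMN b : twist b * twist (~~ b) = q.
Proof. by case: b; rewrite /= ?mulr1 ?mul1r. Qed.

Lemma tau_supp b K w : ~~ incr_in K w -> tau b K w = 0.
Proof.
case: b; first exact: (tau_sum_supp q (fun n => ~~ odd n) half).
exact: (tau_sum_supp q odd (fun n => n.-1./2)).
Qed.

Lemma tau_setU1_max b (K : {set S}) z : (forall j, j \in K -> (j < z)%O) ->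
  tau b (z |: K) =1
    (fun x => emul (tau b K) (mono [:: z]) x + (-1) ^+ #|K| * twist b * tau (~~ b) K x).
Proof.
move=> Kz x; case: b => /=; first exact: tau_plus_setU1_max.
by rewrite mulr1; exact: tau_minus_setU1_max.
Qed.

(* [tau_mul_reduct b J s] is the reduct of τ^b_J t_s claimed by the theorem. *)
Definition tau_ins (b : bool) (J : {set S}) (s : S) : elt :=
  if s \in J then fun=> 0 else escale ((-1) ^+ #|[set j in J | (s < j)%O]|) (tau b (s |: J)).

Definition tau_mul_reduct (b : bool) (J : {set S}) (s : S) : elt :=
  fun x => tau_ins b J s x + (-1) ^+ #|J|.+1 * twist b * tau (~~ b) J x.

Lemma tau_mul_reduct_supp b K s w : ~~ incr_in (s |: K) w -> tau_mul_reduct b K s w = 0.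
Proof.
move=> Nw; have KsK : K \subset s |: K by apply/subsetP => j jK; rewrite inE jK orbT.
rewrite /tau_mul_reduct /tau_ins (tau_supp _ (contra (incr_inS KsK) Nw)) mulr0 addr0.
by case: ifP => // _; rewrite /escale tau_supp ?mulr0.
Qed.

Lemma tau_mul_max b (J : {set S}) s : (forall j, j \in J -> (j < s)%O) ->
  emul (tau b J) (mono [:: s]) =1 tau_mul_reduct b J s.
Proof.
move=> Js x; have sJ : s \notin J by apply/negP => /Js; rewrite ltxx.
rewrite /tau_mul_reduct /tau_ins (negbTE sJ) /escale.
have -> : [set j in J | (s < j)%O] = set0.
  by apply/setP => j; rewrite !inE; case jJ: (j \in J); rewrite // lt_gtF ?Js.
by rewrite cards0 (tau_setU1_max _ Js) exprS; ring.
Qed.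

Lemma tau_ins_setU1_max b (K : {set S}) z s :
  (forall j, j \in K -> (j < z)%O) -> (s < z)%O ->
  tau_ins b (z |: K) s =1
    (fun x => - emul (tau_ins b K s) (mono [:: z]) x +
              (-1) ^+ #|K| * twist b * tau_ins (~~ b) K s x).
Proof.
move=> Kz sz x; rewrite /tau_ins in_setU1 (lt_eqF sz) /=; case: ifP => sK.
  by rewrite /emul big1 ?oppr0 ?mulr0 ?addr0 // => i _; rewrite mul0r.
have zK : z \notin K by apply/negP => /Kz; rewrite ltxx.
have sKz j : j \in s |: K -> (j < z)%O by rewrite in_setU1 => /orP [/eqP -> //|/Kz].
have -> : [set j in z |: K | (s < j)%O] = z |: [set j in K | (s < j)%O].
  by apply/setP => j; rewrite !inE; case: eqP => [->|]; rewrite ?sz.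
rewrite cardsU1 inE (negbTE zK) setUCA /escale (tau_setU1_max _ sKz) emulZl cardsU1 sK /=.
by rewrite !exprS; ring.
Qed.

Lemma reduces_tau_mul (J : {set S}) s b :
  reduces_on q unsorted (emul (tau b J) (mono [:: s])) (tau_mul_reduct b J s).
Proof.
elim/set_max_ind: J s b => [|z K Kz IH] s b.
  by apply: reduces_on_refl; apply: tau_mul_max => j; rewrite inE.
have zK : z \notin K by apply/negP => /Kz; rewrite ltxx.
have [F0 G0] := (@tau_supp b K, @tau_supp (~~ b) K).
have tau_z t := emul_linl (mono [:: t]) (tau_setU1_max b Kz).
case: (ltgtP s z) => [sz|zs|->].
- apply: reduces_on_eql (reduces_on_eqr _ (reduces_on_mul_swap Kz F0 G0 sz
           (@tau_mul_reduct_supp b K s) _ (IH s b) (IH s (~~ b)))) => x.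
    by rewrite tau_z emul_monorA.
  rewrite /tau_mul_reduct tau_ins_setU1_max // (tau_setU1_max _ Kz) negbK.
  rewrite (emul_linl _ (frefl _)) cardsU1 (negbTE zK) !exprS.
  rewrite -[in LHS](twistMN b) -signr_odd.
  by case: (odd _); ring.
- apply: reduces_on_refl; apply: tau_mul_max => j.
  by rewrite in_setU1 => /orP [/eqP -> //|/Kz jz]; exact: lt_trans zs.
- apply: reduces_on_eql (reduces_on_eqr _ (reduces_on_mul_sq q Kz F0 G0 _)) => x.
    by rewrite tau_z emul_monorA.
  rewrite /tau_mul_reduct /tau_ins setU11 (tau_setU1_max _ Kz) negbK cardsU1 (negbTE zK).
  rewrite !exprS -[in LHS](twistMN b) -signr_odd.
  by case: (odd _); ring.
Qed.

End TauReduction.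

Unset Implicit Arguments.

Theorem lemma3p7 (d : Order.disp_t) (S : finOrderType d) (R : comPzRingType) (q : R)
    (J : {set S}) (s : S) :
  (s \in J ->
     reduces q (emul (tau_plus q J) (mono [:: s]))
               (escale ((-1) ^+ (#|J|.+1) * q) (tau_minus q J))
  /\ reduces q (emul (tau_minus q J) (mono [:: s]))
               (escale ((-1) ^+ (#|J|.+1)) (tau_plus q J)))
  /\
  (s \notin J ->
     let J'' := [set j in J | (s < j)%O] in
     reduces q (emul (tau_plus q J) (mono [:: s]))
               (eadd (escale ((-1) ^+ #|J''|) (tau_plus q (s |: J)))
                     (escale ((-1) ^+ (#|J|.+1) * q) (tau_minus q J)))
  /\ reduces q (emul (tau_minus q J) (mono [:: s]))
               (eadd (escale ((-1) ^+ #|J''|) (tau_minus q (s |: J)))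
                     (escale ((-1) ^+ (#|J|.+1)) (tau_plus q J)))).
Proof.
have reduct b (h : seq S -> R) :
    tau_mul_reduct q b J s =1 h -> reduces q (emul (tau q b J) (mono [:: s])) h.
  by move=> E; apply: reduces_on_reduces (reduces_on_eqr E (reduces_tau_mul q J s b)).
split=> sJ; split; [apply: (reduct true) | apply: (reduct false)
                   | apply: (reduct true) | apply: (reduct false)] => x;
  by rewrite /tau_mul_reduct /tau_ins ?sJ ?(negbTE sJ) /eadd /escale /=; ring.
Qed.
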